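(* The set of finite factors of $\mathbf{t}_{3/2}$ is closed under bit-wise complement (if $u$ is a factor then so is $\bar u$), and so is the set of finite factors of $\mathbf{t}'$. Consequently, $\mathsf{p}_{\mathbf{t}_{3/2}}(n+1)=2\,\mathsf{p}_{\Delta(\mathbf{t}_{3/2})}(n)$ for all $n\ge 0$.
   Context: Base-$3/2$ expansions: $\langle 0\rangle_{3/2}$ is the empty word, and for $n\ge 1$, writing $2n=3m+d$ with integers $m\ge0$, $d\in\{0,1,2\}$, set $\langle n\rangle_{3/2}=\langle m\rangle_{3/2}\,d$. The Thue--Morse word in base $3/2$ is $\mathbf{t}_{3/2}=(t_n)_{n\ge0}\in\{0,1\}^{\mathbb{N}}$ where $t_n$ is the digit sum of $\langle n\rangle_{3/2}$ modulo $2$; equivalently the unique binary sequence with $t_0=0$, $t_{3n}=t_{3n+1}=t_{2n}$, $t_{3n+2}=1-t_{2n+1}$. Dekking's word $\mathbf{t}'=(x_n)_{n\ge0}$ is the unique binary infinite word with $x_0=0$ such that $\mathbf{t}'=\beta(x_0x_1)\beta(x_2x_3)\cdots$ where $\beta(00)=\beta(01)=010$, $\beta(10)=\beta(11)=101$. The bit-wise complement $\bar u$ of a binary word $u$ is obtained by exchanging $0$ and $1$. For an infinite binary word $\mathbf{x}=(x_n)$, $\Delta(\mathbf{x})=(x_{n+1}-x_n \bmod 2)_{n\ge0}$ is its first difference sequence, and $\mathsf{p}_{\mathbf{x}}(n)$ denotes the number of distinct factors of length $n$ of $\mathbf{x}$. *)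

From mathcomp Require Import all_boot.
From mathcomp Require Import boolp.
Set Implicit Arguments. Unset Strict Implicit. Unset Printing Implicit Defensive.

(* Infinite binary words are functions nat -> bool (false = 0, true = 1). *)
Definition word := nat -> bool.

(* Base-3/2 expansion <n>_{3/2}, most significant digit first.
   For n >= 1, 2n = 3m + d with d in {0,1,2}; <n> = <m> d.
   Computed with fuel (fuel n suffices since m < n for n >= 1). *)
Fixpoint b32_aux (fuel n : nat) : seq nat :=
  match fuel with
  | 0 => [::]
  | fuel'.+1 =>
      if n == 0 then [::] else rcons (b32_aux fuel' ((2 * n) %/ 3)) ((2 * n) %% 3)
  end.
Definition base32 (n : nat) : seq nat := b32_aux n n.

Definition t32 : word := fun n => odd (sumn (base32 n)).

Definition beta (a b : bool) : seq bool :=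
  if a then [:: true; false; true] else [:: false; true; false].

Definition is_dekking (x : word) : Prop :=
  x 0 = false /\
  forall k j, j < 3 -> x (3 * k + j) = nth false (beta (x (2 * k)) (x (2 * k).+1)) j.

Definition factor (x : word) (u : seq bool) : Prop :=
  exists i, u = mkseq (fun j => x (i + j)) (size u).

Definition compl (u : seq bool) : seq bool := map negb u.

Definition Delta (x : word) : word := fun n => x n.+1 (+) x n.

Definition complexity (x : word) (n : nat) : nat :=
  #|[set u : n.-tuple bool | `[< factor x u >]]|.

From mathcomp Require Import all_boot.
From mathcomp Require Import boolp.
From mathcomp Require Import zify.
Set Implicit Arguments. Unset Strict Implicit.

(* Both words satisfy w n = D n (+) w (M n), where M n is roughly 2n/3 and D
   depends only on n mod 3.  Unfolding this k times shows that shifting by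
   3^k j adds the constant w (2^k j) to every position n <= k.  So it suffices
   to find, for every k, a multiple of 2^k on which w is 1; such a multiple
   comes from a position r with w (r + 9 j) = ~~ w (4 j) for all j, after solving
   r + 3^(k+2) J = 0 mod 2^(k+2).  Complement-closure then makes the map
   u |-> (first letter of u, difference word of u) a bijection from the
   factors of length n + 1 onto bool times the factors of Delta of length n. *)

Lemma factor_nth (x : word) (u : seq bool) :
  factor x u <-> exists i, forall k, k < size u -> nth false u k = x (i + k).
Proof.
split=> [[i Hi] | [i Hi]]; exists i; first by move=> k Hk; rewrite Hi nth_mkseq.
apply: (@eq_from_nth _ false); first by rewrite size_mkseq.
by move=> k Hk; rewrite nth_mkseq // Hi.
Qed.

Lemma odd_mul_dvd_pow2 (m a r : nat) : odd m -> exists j, 2 ^ a %| r + m * j.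
Proof.
move=> odd_m; elim: a => [|a [j /dvdnP [c Hc]]]; first by exists 0.
case odd_c: (odd c).
- exists (j + 2 ^ a).
  have -> : r + m * (j + 2 ^ a) = 2 ^ a * (c + m) by rewrite mulnDr addnA Hc; lia.
  by rewrite expnS [2 * _]mulnC dvdn_pmul2l ?expn_gt0 // dvdn2 oddD odd_c odd_m.
- by exists j; rewrite Hc expnS dvdn_pmul2r ?expn_gt0 // dvdn2 odd_c.
Qed.

Section SelfSimilarWord.

Variables (w : word) (M : nat -> nat) (D : nat -> bool).
Hypothesis M_shift : forall n j, M (n + 3 * j) = M n + 2 * j.
Hypothesis D_periodic : forall n j, D (n + 3 * j) = D n.
Hypothesis w_rec : forall n, w n = D n (+) w (M n).
Hypothesis M0 : M 0 = 0.
Hypothesis w0 : w 0 = false.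
Hypothesis M_lt : forall n, 0 < n -> M n < n.

Lemma w_step n j : w (n + 3 * j) = D n (+) w (M n + 2 * j).
Proof. by rewrite w_rec M_shift D_periodic. Qed.

Lemma iter_M_eq0 k n : n <= k -> iter k M n = 0.
Proof.
elim: k n => [|k IHk] n le_nk; first by case: n le_nk.
rewrite iterSr IHk //; case: n le_nk => [|n] le_nk; first by rewrite M0.
by have := M_lt (ltn0Sn n); lia.
Qed.

Lemma w_shift k n :
  exists b, forall j, w (n + 3 ^ k * j) = b (+) w (iter k M n + 2 ^ k * j).
Proof.
elim: k n => [|k IHk] n; first by exists false => j; rewrite !mul1n.
have [b Hb] := IHk (M n); exists (D n (+) b) => j.
rewrite expnS -mulnA w_step mulnCA Hb iterSr -addbA.
by rewrite expnS -mulnA mulnCA.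
Qed.

Lemma w_shift_small k n j : n <= k -> w (n + 3 ^ k * j) = w n (+) w (2 ^ k * j).
Proof.
move=> le_nk; have [b Hb] := w_shift k n.
have wn : w n = b by have := Hb 0; rewrite !muln0 !addn0 iter_M_eq0 // w0 addbF.
by rewrite Hb iter_M_eq0 // wn.
Qed.

Variable r : nat.
Hypothesis MMr : M (M r) = 0.
Hypothesis Dr : D r (+) D (M r).

Lemma w_shift_r k j : w (r + 3 ^ k.+2 * j) = ~~ w (2 ^ k.+2 * j).
Proof.
have -> : r + 3 ^ k.+2 * j = r + 3 * (3 * (3 ^ k * j)) by rewrite !expnS !mulnA.
rewrite w_step [2 * _]mulnCA w_step MMr addbA Dr /= add0n.
have -> : 2 * (2 * (3 ^ k * j)) = 0 + 3 ^ k * (4 * j) by lia.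
by rewrite w_shift_small // w0 /= !expnS mulnCA !mulnA.
Qed.

Lemma w_pow2_mul k : exists j, w (2 ^ k * j).
Proof.
suff [j wj] : exists j, w (2 ^ k.+2 * j).
  by exists (4 * j); have -> : 2 ^ k * (4 * j) = 2 ^ k.+2 * j by rewrite !expnS; lia.
have odd3k : odd (3 ^ k.+2) by rewrite oddX.
have [J /dvdnP [q Hq]] := odd_mul_dvd_pow2 k.+2 r odd3k.
have wq : w (2 ^ k.+2 * q) = ~~ w (2 ^ k.+2 * J) by rewrite mulnC -Hq w_shift_r.
by case wJ: (w (2 ^ k.+2 * J)); [exists J | exists q; rewrite wq wJ].
Qed.

Lemma factor_compl u : factor w u -> factor w (compl u).
Proof.
move=> /factor_nth [i Hi]; have [j wj] := w_pow2_mul (i + size u).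
apply/factor_nth; exists (i + 3 ^ (i + size u) * j) => k; rewrite size_map => ltk.
rewrite (nth_map false) // Hi // addnAC w_shift_small ?wj ?addbT //; lia.
Qed.

End SelfSimilarWord.

Definition diff (u : seq bool) : seq bool := pairmap addb (head false u) (behead u).

Lemma size_diff u : size (diff u) = (size u).-1.
Proof. by rewrite size_pairmap size_behead. Qed.

Lemma nth_diff u k : k < (size u).-1 ->
  nth false (diff u) k = nth false u k (+) nth false u k.+1.
Proof. by case: u => [|a s] //= ltk; rewrite (nth_pairmap false). Qed.

Lemma diff_window (x : word) i n :
  diff (mkseq (fun j => x (i + j)) n) = mkseq (fun j => Delta x (i + j)) n.-1.
Proof.
apply: (@eq_from_nth _ false); first by rewrite size_diff !size_mkseq.
rewrite size_diff size_mkseq => k ltk.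
by rewrite nth_diff ?size_mkseq // !nth_mkseq 1?addbC ?addnS //; lia.
Qed.

Lemma diff_compl u : diff (compl u) = diff u.
Proof.
case: u => [|a s] //; rewrite /diff /compl /=; elim: s a => //= b s IHs a.
by rewrite IHs addbN addNb negbK.
Qed.

Lemma diff_inj u v :
  head false u = head false v -> size u = size v -> diff u = diff v -> u = v.
Proof.
rewrite /diff; case: u v => [|a s] [|b t] //= -> _.
by move=> /(can_inj (pairmapK addKb b)) ->.
Qed.

Lemma factor_diff (x : word) u : factor x u -> factor (Delta x) (diff u).
Proof. by move=> [i Hu]; exists i; rewrite size_diff {1}Hu diff_window. Qed.

Lemma tdiff_proof n (u : n.+1.-tuple bool) : size (diff u) == n.
Proof. by rewrite size_diff size_tuple. Qed.

Definition tdiff n (u : n.+1.-tuple bool) : n.-tuple bool := Tuple (tdiff_proof u).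

Lemma factor_Delta (x : word) n (v : n.-tuple bool) :
  factor (Delta x) v -> exists2 u : n.+1.-tuple bool, factor x u & tdiff u = v.
Proof.
move=> [i Hv].
have su : size (mkseq (fun j => x (i + j)) n.+1) == n.+1 by rewrite size_mkseq.
exists (Tuple su); first by exists i; rewrite size_tuple.
by apply: val_inj; rewrite /= diff_window Hv size_tuple.
Qed.

Lemma complexity_compl_closed (x : word) n :
  (forall u, factor x u -> factor x (compl u)) ->
  complexity x n.+1 = 2 * complexity (Delta x) n.
Proof.
move=> closed; rewrite /complexity.
set F := [set u : n.+1.-tuple bool | `[< factor x u >]].
set G := [set v : n.-tuple bool | `[< factor (Delta x) v >]].
pose hd_diff (u : n.+1.-tuple bool) := (head false u, tdiff u).
have hd_diff_inj : injective hd_diff.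
  by move=> u v [= hd df]; apply/val_inj/diff_inj; rewrite ?size_tuple.
have imF : hd_diff @: F = setX [set: bool] G.
  apply/setP => -[b v]; rewrite !inE /=; apply/imsetP/asboolP.
    by move=> [u]; rewrite inE => /asboolP /factor_diff ? [_ ->].
  move=> /factor_Delta [u ux <-].
  have uF : u \in F by rewrite inE; apply/asboolP.
  have [<- | hb] := eqVneq (head false u) b; first by exists u.
  exists (map_tuple negb u); first by rewrite inE; apply/asboolP; exact: closed.
  congr pair; last by apply: val_inj; rewrite /= diff_compl.
  by case: u {ux uF} hb => -[|a s] //= _; case: a; case: b.
by rewrite -(card_imset F hd_diff_inj) imF cardsX cardsT card_bool.
Qed.

Lemma b32_aux_fuel f g n : n <= f -> n <= g -> b32_aux f n = b32_aux g n.
Proof.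
elim: f g n => [|f IHf] [|g] [|n] //= le_nf le_ng.
by congr rcons; apply: IHf; lia.
Qed.

Lemma t32_rec n : t32 n = odd ((2 * n) %% 3) (+) t32 ((2 * n) %/ 3).
Proof.
case: n => [|n] //; rewrite /t32 /base32 /= sumn_rcons oddD addbC.
by congr (_ (+) odd (sumn _)); apply: b32_aux_fuel; lia.
Qed.

Lemma dekking_rec x : is_dekking x -> forall n, x n = (n %% 3 == 1) (+) x (2 * (n %/ 3)).
Proof.
move=> [_ Hx] n; rewrite {1}(divn_eq n 3) mulnC Hx ?ltn_mod //.
by case: (x _); case: (n %% 3) (ltn_mod n 3) => [|[|[|]]].
Qed.

Theorem proposition15 :
  (forall u : seq bool, factor t32 u -> factor t32 (compl u)) /\
  (forall x : word, is_dekking x ->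
     forall u : seq bool, factor x u -> factor x (compl u)) /\
  (forall n : nat, complexity t32 n.+1 = 2 * complexity (Delta t32) n).
Proof.
have t32_closed : forall u, factor t32 u -> factor t32 (compl u).
  apply: (@factor_compl _ (fun n => 2 * n %/ 3) (fun n => odd (2 * n %% 3))
            _ _ t32_rec _ _ _ 2) => // [n j | n j | n].
  - lia.
  - by congr odd; lia.
  - lia.
split=> //; split=> [x dek_x | n]; last exact: complexity_compl_closed.
apply: (@factor_compl _ (fun n => 2 * (n %/ 3)) (fun n => n %% 3 == 1)
          _ _ (dekking_rec dek_x) _ _ _ 1) => // [n j | n j | | n].
- lia.
- by congr (_ == _); lia.
- by case: dek_x.
- lia.
Qed.
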